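(* Let $n\ge1$ and $\gamma\in PSL(n+1,\mathbb{C})$. Then $\gamma$ is elliptic if and only if there exists $h\in PSL(n+1,\mathbb{C})$ such that $h^{-1}\gamma h(T(r))=T(r)$ for every $r>0$, where $T(r)=\{[z_1:\dots:z_{n+1}]\in\mathbb{P}^n_{\mathbb{C}}:\ \sum_{j=1}^n|z_j|^2=r|z_{n+1}|^2\}$ (these $T(r)$, $r>0$, form a foliation of $\mathbb{C}^n\setminus\{0\}=\mathbb{P}^n_{\mathbb{C}}\setminus(\{z_{n+1}=0\}\cup\{[e_{n+1}]\})$ by concentric spheres).
   Context: $\gamma\in PSL(n+1,\mathbb{C})=GL(n+1,\mathbb{C})/\mathbb{C}^*$ is called elliptic if every lift $\widetilde\gamma\in SL(n+1,\mathbb{C})$ of $\gamma$ is diagonalizable and all its eigenvalues have modulus $1$. *)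

From HB Require Import structures.
From mathcomp Require Import all_boot all_order all_algebra.
From mathcomp Require Import reals.
From mathcomp.real_closed Require Import complex.
Set Implicit Arguments. Unset Strict Implicit. Unset Printing Implicit Defensive.
Import Order.TTheory GRing.Theory Num.Theory.
Local Open Scope ring_scope.

(* An element of PSL(n+1,C) = GL(n+1,C)/C^* is represented by any
   invertible (n+1)x(n+1) complex matrix (a lift).  Points of P^n are
   represented by nonzero column vectors; [z] = [w] iff w = c z, c <> 0. *)

Section Defs.
Variable R : realType.
Local Notation C := (R[i])%C.

(* gamma (represented by g) is elliptic: every lift of gamma to SL(n+1,C),
   i.e. every scalar multiple c *: g with determinant 1, is diagonalizable
   and all its eigenvalues have modulus 1. *)
Definition elliptic (m : nat) (g : 'M[C]_m) : Prop :=
  forall c : C, \det (c *: g) = 1 ->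
    diagonalizable (c *: g) /\
    (forall l : C, eigenvalue (c *: g) l -> `|l| = 1).

Definition inT (n : nat) (r : C) (z : 'cV[C]_n.+1) : Prop :=
  z != 0 /\
  \sum_(j < n) `|z (widen_ord (leqnSn n) j) 0| ^+ 2 = r * `|z ord_max 0| ^+ 2.

Definition in_image_T (n : nat) (M : 'M[C]_n.+1) (r : C) (w : 'cV[C]_n.+1) : Prop :=
  w != 0 /\ exists z, inT r z /\ exists c : C, c != 0 /\ w = c *: (M *m z).

Definition preserves_T (n : nat) (M : 'M[C]_n.+1) (r : C) : Prop :=
  forall w : 'cV[C]_n.+1, in_image_T M r w <-> inT r w.
End Defs.

From HB Require Import structures.
From mathcomp Require Import all_boot all_order all_algebra.
From mathcomp Require Import reals.
From mathcomp.real_closed Require Import complex.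
From mathcomp Require Import spectral sesquilinear.
From mathcomp Require Import ring.
Import Order.TTheory GRing.Theory Num.Theory.
Local Open Scope ring_scope.
Set Implicit Arguments. Unset Strict Implicit.

(* If g is elliptic, a lift of g to SL(n+1,C) is conjugate to a diagonal matrix with
   unimodular entries, and such a matrix visibly preserves every sphere T(r).
   Conversely, let M = h^-1 g h preserve every T(r). Since M maps the point
   a e_k + b e_l + e_(n+1) of T(|a|^2 + |b|^2) back into that sphere, we get
   polynomial identities in a and b; their extreme coefficients force M to be block
   diagonal with M^* M = |M_(n+1,n+1)|^2 I. Hence the determinant-one lifts of M are
   unitary, so they are diagonalizable with eigenvalues of modulus 1, and this
   property passes to the conjugate g. *)

Section Similarity.
Variable F : fieldType.

Lemma eigenvalue_diag_mx n (d : 'rV[F]_n) i : eigenvalue (diag_mx d) (d 0 i).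
Proof.
apply/eigenvalueP; exists (delta_mx 0 i); first by rewrite -rowE row_diag_mx.
by apply/eqP => /matrixP /(_ 0 i); rewrite !mxE !eqxx => /eqP; rewrite oner_eq0.
Qed.

Lemma eigenvalue_conj n (P A : 'M[F]_n) a : P \in unitmx ->
  eigenvalue (P *m A *m invmx P) a -> eigenvalue A a.
Proof.
move=> Pu /eigenvalueP [v vA v0]; apply/eigenvalueP; exists (v *m P).
  have -> : v *m P *m A = v *m (P *m A *m invmx P) *m P by rewrite !mulmxA mulmxKV.
  by rewrite vA -scalemxAl.
by rewrite mulmx_free_eq0 ?row_free_unit.
Qed.

Lemma diagonalizable_conj n (P A : 'M[F]_n) : P \in unitmx ->
  diagonalizable A -> diagonalizable (P *m A *m invmx P).
Proof.
move=> Pu [Q Qu /similar_diagPex [D /(similarP Qu) QA]].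
have QPu : Q *m invmx P \in unitmx by rewrite unitmx_mul Qu unitmx_inv.
exists (Q *m invmx P) => //; apply/similar_diagPex; exists D.
by apply/(similarP QPu); rewrite !mulmxA mulmxKV // QA.
Qed.

End Similarity.

Section NumClosedField.
Variable C : numClosedFieldType.
Local Open Scope sesquilinear_scope.

Lemma unitarymx_eigenvalue_norm n (U : 'M[C]_n) a :
  U \is unitarymx -> eigenvalue U a -> `|a| = 1.
Proof.
move=> /unitarymxP UU /eigenvalueP [v vU v0].
have : dotmx (v *m U) (v *m U) = dotmx v v.
  by rewrite !dotmxE trmx_mul map_mxM mulmxA -(mulmxA v) UU mulmx1.
have vv0 : dotmx v v != 0 by rewrite lt0r_neq0 // dnorm_gt0.
rewrite vU dnormZ -[RHS]mul1r => /(mulIf vv0) /eqP.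
by rewrite pexpr_eq1 ?normr_ge0 // => /eqP.
Qed.

Lemma unitarymx_normal n (U : 'M[C]_n) : U \is unitarymx -> U \is normalmx.
Proof. by move=> /unitarymxP UU; apply/normalmxP; rewrite UU (mulmx1C UU). Qed.

Lemma normalmx_diagonalizable n (A : 'M[C]_n) : A \is normalmx -> diagonalizable A.
Proof.
move=> /orthomx_spectralP AE; exists (spectralmx A); first exact: spectral_unit.
apply/(similar_diagLR (spectral_unit A)); exists (spectral_diag A).
by rewrite conjVmx ?spectral_unit.
Qed.

Lemma scalar_gram_unitarymx n (U : 'M[C]_n.+1) a :
  U^t* *m U = a%:M -> 0 <= a -> \det U = 1 -> U \is unitarymx.
Proof.
move=> UU a0 dU; have a1 : a = 1.
  apply/eqP; rewrite -(@pexpr_eq1 _ a n.+1) // -det_scalar -UU.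
  by rewrite det_mulmx det_map_mx det_tr dU rmorph1 mulr1.
by apply/unitarymxP; apply: mulmx1C; rewrite UU a1.
Qed.

Lemma exists_det1_scale n (g : 'M[C]_n.+1) : g \in unitmx -> exists c, \det (c *: g) = 1.
Proof.
rewrite unitmxE unitfE => dg; exists ((n.+1).-root (\det g)^-1).
by rewrite detZ rootCK // mulVf.
Qed.

Lemma sqr_norm_real_affine (x p q : C) : x^* = x ->
  `|x * p + q| ^+ 2 = x ^+ 2 * `|p| ^+ 2 + x * (p * q^* + p^* * q) + `|q| ^+ 2.
Proof. by move=> xR; rewrite !normCK rmorphD rmorphM /= xR; ring. Qed.

Lemma sqr_normDM (s p q : C) :
  `|p + s * q| ^+ 2 = `|p| ^+ 2 + `|s| ^+ 2 * `|q| ^+ 2 + s^* * (p * q^*) + s * (p^* * q).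
Proof. by rewrite !normCK rmorphD rmorphM /=; ring. Qed.

End NumClosedField.

Lemma quartic_nat_roots (F : numDomainType) (p4 p3 p2 p1 p0 : F) :
  (forall t : nat, (0 < t)%N ->
     p4 * t%:R ^+ 4 + p3 * t%:R ^+ 3 + p2 * t%:R ^+ 2 + p1 * t%:R + p0 = 0) ->
  p4 = 0 /\ p0 = 0.
Proof.
pose P (t : F) := p4 * t ^+ 4 + p3 * t ^+ 3 + p2 * t ^+ 2 + p1 * t + p0.
move=> PN; have P0 t : (0 < t)%N -> P t%:R = 0 by apply: PN.
(* Fourth finite differences at 1, ..., 5 isolate the two extreme coefficients. *)
have e4 : 24%:R * p4 = P 5%:R - 4%:R * P 4%:R + 6%:R * P 3%:R - 4%:R * P 2%:R + P 1%:R.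
  by rewrite /P; ring.
have e0 : p0 = 5%:R * P 1%:R - 10%:R * P 2%:R + 10%:R * P 3%:R - 5%:R * P 4%:R + P 5%:R.
  by rewrite /P; ring.
rewrite !P0 // !mulr0 !subr0 !addr0 in e4 e0; split => //.
by move/eqP: e4; rewrite mulf_eq0 pnatr_eq0 => /eqP.
Qed.

Section ConcentricSpheres.
Variable R : realType.
Local Notation C := R[i]%C.
Local Notation widen := (widen_ord (leqnSn _)).
Local Open Scope sesquilinear_scope.

Lemma widen_eq_max n (j : 'I_n) : (widen j == ord_max :> 'I_n.+1) = false.
Proof. by apply/negbTE; rewrite -val_eqE /= neq_ltn ltn_ord. Qed.

Lemma widen_eq n (j k : 'I_n) : (widen j == widen k :> 'I_n.+1) = (j == k).
Proof. by rewrite -val_eqE /= val_eqE. Qed.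

Lemma ord_max_or_widen n (i : 'I_n.+1) : i = ord_max \/ exists j : 'I_n, i = widen j.
Proof.
case: (unliftP ord_max i) => [j ->|->]; last by left.
by right; exists j; apply: val_inj; rewrite /= /bump leqNgt ltn_ord.
Qed.

Lemma preserves_T_scale_diag n (e : C) (D : 'rV[C]_n.+1) r :
  e != 0 -> (forall i, `|D 0 i| = 1) -> preserves_T (e *: diag_mx D) r.
Proof.
move=> e0 D1 w; have D0 i : D 0 i != 0 by rewrite -normr_eq0 D1 oner_eq0.
have De i (z : 'cV[C]_n.+1) : ((e *: diag_mx D) *m z) i 0 = e * D 0 i * z i 0.
  by rewrite -scalemxAl mul_diag_mx !mxE mulrA.
split.
- move=> [w0 [z [[z0 zT] [c [c0 wE]]]]]; subst w; split => //.
  have Ei i : `|(c *: (e *: diag_mx D *m z)) i 0| ^+ 2 = `|c * e| ^+ 2 * `|z i 0| ^+ 2.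
    by rewrite mxE De !normrM !exprMn D1 expr1n mulr1 mulrA.
  under eq_bigr do rewrite Ei.
  by rewrite -mulr_sumr zT Ei mulrCA.
- move=> [w0 wT]; split => //.
  exists (\col_i (w i 0 / D 0 i)); split.
    split.
      apply: contra_neq w0 => /matrixP wD0; apply/matrixP => i j; rewrite ord1.
      move/(_ i 0)/eqP: wD0; rewrite !mxE mulf_eq0 invr_eq0 (negbTE (D0 i)) orbF.
      by move/eqP.
    have Ei i : `|(\col_i (w i 0 / D 0 i)) i 0| = `|w i 0|.
      by rewrite mxE normrM normrV ?unitfE // D1 invr1 mulr1.
    under eq_bigr do rewrite Ei.
    by rewrite wT Ei.
  exists e^-1; split; first by rewrite invr_eq0.
  apply/matrixP => i j; rewrite ord1 mxE De mxE.
  by field; rewrite e0 D0.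
Qed.

Lemma preserves_T_mulmx n (M : 'M[C]_n.+1) r z : M \in unitmx ->
  preserves_T M r -> inT r z -> inT r (M *m z).
Proof.
move=> Mu MT zT; apply/(MT (M *m z)); have [z0 _] := zT.
split; last by exists z; split => //; exists 1; rewrite oner_neq0 scale1r.
by apply: contra_neq z0 => Mz0; rewrite -[z]mul1mx -(mulVmx Mu) -mulmxA Mz0 mulmx0.
Qed.

Definition test_point n (k l : 'I_n) (a b : C) : 'cV[C]_n.+1 :=
  a *: delta_mx (widen k) 0 + b *: delta_mx (widen l) 0 + delta_mx ord_max 0.

Lemma test_pointE n (k l : 'I_n) (a b : C) i :
  test_point k l a b i 0 = a * (i == widen k)%:R + b * (i == widen l)%:R + (i == ord_max)%:R.
Proof. by rewrite !mxE !eqxx !andbT. Qed.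

Lemma inT_test_point n (k l : 'I_n) (a b : C) : (k != l) || (b == 0) ->
  inT (`|a| ^+ 2 + `|b| ^+ 2) (test_point k l a b).
Proof.
move=> klb; split.
  apply/eqP => /matrixP /(_ ord_max 0) /eqP.
  by rewrite test_pointE mxE eqxx ![ord_max == _]eq_sym !widen_eq_max !mulr0 !add0r oner_eq0.
rewrite test_pointE eqxx ![ord_max == _]eq_sym !widen_eq_max !mulr0 !add0r.
rewrite normr1 expr1n mulr1.
have Ej j : `|test_point k l a b (widen j) 0| ^+ 2 =
    (if j == k then `|a| ^+ 2 else 0) + (if j == l then `|b| ^+ 2 else 0).
  rewrite test_pointE !widen_eq widen_eq_max addr0.
  have S := (mulr1n, mulr0n, mulr1, mulr0, addr0, add0r, normr0, expr0n).
  case: (j =P k) => [jk|jk]; case: (j =P l) => [jl|jl] /=; rewrite ?S //.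
  by move: klb; rewrite -jk -jl eqxx => /eqP ->; rewrite ?S.
under eq_bigr do rewrite Ej.
by rewrite big_split /= -!big_mkcond /= !big_pred1_eq.
Qed.

Section PreservingAllSpheres.
Variables (n : nat) (M : 'M[C]_n.+1).
Hypotheses (Mu : M \in unitmx) (MT : forall r, 0 < r -> preserves_T M r).

Lemma preserves_T_test_point (k l : 'I_n) (a b : C) : a != 0 -> (k != l) || (b == 0) ->
  \sum_(j < n) `|a * M (widen j) (widen k) + b * M (widen j) (widen l) + M (widen j) ord_max| ^+ 2
  = (`|a| ^+ 2 + `|b| ^+ 2) *
    `|a * M ord_max (widen k) + b * M ord_max (widen l) + M ord_max ord_max| ^+ 2.
Proof.
move=> a0 klb.
have r0 : 0 < `|a| ^+ 2 + `|b| ^+ 2.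
  by apply: ltr_pwDl; [apply: exprn_gt0; rewrite normr_gt0 | exact: exprn_ge0].
have [_] := preserves_T_mulmx Mu (MT r0) (inT_test_point a klb).
have ME i : (M *m test_point k l a b) i 0 = a * M i (widen k) + b * M i (widen l) + M i ord_max.
  by rewrite !mulmxDr -!scalemxAr -!colE !mxE.
by under eq_bigr do rewrite ME; rewrite ME.
Qed.

Lemma preserves_T_corner (k : 'I_n) :
  M ord_max (widen k) = 0 /\ \sum_(j < n) `|M (widen j) ord_max| ^+ 2 = 0.
Proof.
pose SA := \sum_(j < n) `|M (widen j) (widen k)| ^+ 2.
pose SB := \sum_(j < n) (M (widen j) (widen k) * (M (widen j) ord_max)^* +
                         (M (widen j) (widen k))^* * M (widen j) ord_max).
pose SZ := \sum_(j < n) `|M (widen j) ord_max| ^+ 2.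
pose c := M ord_max (widen k); pose d := M ord_max ord_max.
(* Test point t e_k + e_(n+1): compare the coefficients of t^4 and t^0. *)
have [] := @quartic_nat_roots _ (- `|c| ^+ 2) (- (c * d^* + c^* * d)) (SA - `|d| ^+ 2) SB SZ.
  move=> t t0; have := @preserves_T_test_point k k t%:R 0.
  rewrite pnatr_eq0 -lt0n t0 !eqxx orbT => /(_ isT isT).
  have tR : (t%:R : C)^* = t%:R by rewrite rmorph_nat.
  under eq_bigr do rewrite mul0r addr0 sqr_norm_real_affine //.
  rewrite mul0r addr0 sqr_norm_real_affine // normr0 expr0n /= addr0 normr_nat.
  rewrite !big_split /= -!mulr_sumr -/SA -/SB -/SZ => /eqP; rewrite -subr_eq0 => /eqP E.
  by rewrite -[RHS]E /c /d; ring.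
by move=> /eqP; rewrite oppr_eq0 sqrf_eq0 normr_eq0 => /eqP.
Qed.

Lemma preserves_T_block_diag :
  (forall k : 'I_n, M ord_max (widen k) = 0) /\ (forall j : 'I_n, M (widen j) ord_max = 0).
Proof.
split => [k|j]; first by have [] := preserves_T_corner k.
have [_ /psumr_eq0P col0] := preserves_T_corner j.
by apply/eqP; rewrite -normr_eq0 -sqrf_eq0 col0 // => i _; apply: exprn_ge0.
Qed.

Lemma preserves_T_gram (k l : 'I_n) :
  \sum_(j < n) (M (widen j) (widen k))^* * M (widen j) (widen l)
    = (k == l)%:R * `|M ord_max ord_max| ^+ 2.
Proof.
have [row0 col0] := preserves_T_block_diag; set d := M ord_max ord_max.
have norm_col k' : \sum_(j < n) `|M (widen j) (widen k')| ^+ 2 = `|d| ^+ 2.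
  have := @preserves_T_test_point k' k' 1 0; rewrite oner_neq0 !eqxx orbT => /(_ isT isT).
  under eq_bigr do rewrite col0 mul1r mul0r !addr0.
  by rewrite row0 mul1r mul0r !addr0 add0r normr1 normr0 expr1n expr0n /= addr0 mul1r.
case: (eqVneq k l) => [<-|kl].
  by rewrite mul1r -(norm_col k); apply: eq_bigr => j _; rewrite normCKC.
rewrite mul0r; set X := \sum_(j < n) _.
have ReX s : s^* * X^* + s * X = 0.
  have := @preserves_T_test_point k l 1 s; rewrite oner_neq0 kl => /(_ isT isT).
  under eq_bigr do rewrite col0 mul1r addr0 sqr_normDM.
  rewrite !row0 mul1r mulr0 !add0r normr1 expr1n !big_split /= -!mulr_sumr !norm_col -/X.
  have -> : \sum_(j < n) M (widen j) (widen k) * (M (widen j) (widen l))^* = X^*.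
    by rewrite rmorph_sum; apply: eq_bigr => j _; rewrite rmorphM /= conjCK mulrC.
  by move=> /eqP; rewrite -subr_eq0 => /eqP E; rewrite -[RHS]E; ring.
(* Re (s X) = 0 for s = 1 and s = 'i forces X = 0. *)
have X2i : 2%:R * 'i * X = 'i * (1^* * X^* + 1 * X) + ('i^* * X^* + 'i * X).
  by rewrite conjCi conjC1; ring.
rewrite !ReX mulr0 addr0 in X2i.
by move/eqP: X2i; rewrite !mulf_eq0 pnatr_eq0 (negbTE (neq0Ci _)) /= => /eqP.
Qed.

Lemma preserves_T_scalar_gram : M^t* *m M = (`|M ord_max ord_max| ^+ 2)%:M.
Proof.
have [row0 col0] := preserves_T_block_diag.
apply/matrixP => i j; rewrite !mxE big_ord_recr /=.
under eq_bigr do rewrite !mxE.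
rewrite !mxE.
have [->|[k ->]] := ord_max_or_widen i; have [->|[l ->]] := ord_max_or_widen j.
- under eq_bigr do rewrite col0 conjC0 mul0r.
  by rewrite big1_eq add0r eqxx mulr1n normCKC.
- under eq_bigr do rewrite col0 conjC0 mul0r.
  by rewrite big1_eq add0r row0 mulr0 eq_sym widen_eq_max mulr0n.
- under eq_bigr do rewrite col0 mulr0.
  by rewrite big1_eq add0r row0 conjC0 mul0r widen_eq_max mulr0n.
- rewrite preserves_T_gram row0 conjC0 mul0r addr0 widen_eq.
  by case: (k == l); rewrite ?mul1r ?mulr1n ?mul0r ?mulr0n.
Qed.

End PreservingAllSpheres.

Lemma elliptic_conj n (P g : 'M[C]_n.+1) : P \in unitmx ->
  elliptic g -> elliptic (P *m g *m invmx P).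
Proof.
move=> Pu ell c; rewrite (_ : c *: _ = P *m (c *: g) *m invmx P); last first.
  by rewrite scalemxAl scalemxAr.
rewrite !det_mulmx det_inv mulrAC divrr ?mul1r -?unitmxE // => /ell [cg_diag cg_eig].
split; first exact: diagonalizable_conj.
by move=> a /(eigenvalue_conj Pu); apply: cg_eig.
Qed.

Lemma scalar_gram_elliptic n (g : 'M[C]_n.+1) a :
  g^t* *m g = a%:M -> 0 <= a -> elliptic g.
Proof.
move=> gg a0 c dcg; have cg_unitary : c *: g \is unitarymx.
  apply: (scalar_gram_unitarymx (a := `|c| ^+ 2 * a)) => //; last first.
    by rewrite mulr_ge0 ?exprn_ge0.
  rewrite [(c *: g)^T]linearZ /= map_mxZ -scalemxAl -scalemxAr gg scalerA.
  by rewrite scale_scalar_mx normCKC.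
split; first exact/normalmx_diagonalizable/unitarymx_normal.
by move=> l; apply: unitarymx_eigenvalue_norm.
Qed.

Lemma elliptic_preserves_T n (g : 'M[C]_n.+1) : g \in unitmx -> elliptic g ->
  exists h : 'M[C]_n.+1, h \in unitmx /\
    forall r : C, 0 < r -> preserves_T (invmx h *m g *m h) r.
Proof.
move=> gu ell; have [c dcg] := exists_det1_scale gu.
have c0 : c != 0 by apply: contra_eq_neq dcg => ->; rewrite scale0r det0 eq_sym oner_neq0.
have [[P Pu /similar_diagPex [D /(similarRL Pu) cgD]] cg_eig] := ell c dcg.
exists (invmx P); split; first by rewrite unitmx_inv.
move=> r _; rewrite invmxK.
have -> : P *m g *m invmx P = c^-1 *: diag_mx D.
  by rewrite cgD -scalemxAr -scalemxAl scalerA mulVf // scale1r.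
apply: preserves_T_scale_diag; first by rewrite invr_eq0.
by move=> i; apply: cg_eig; apply: (eigenvalue_conj Pu); rewrite -cgD eigenvalue_diag_mx.
Qed.

End ConcentricSpheres.

Theorem mainTheorem3 (R : realType) (n : nat) (g : 'M[R[i]%C]_n.+1) :
  (1 <= n)%N -> g \in unitmx ->
  elliptic g <->
  exists h : 'M[R[i]%C]_n.+1, h \in unitmx /\
    forall r : R[i]%C, 0 < r -> preserves_T (invmx h *m g *m h) r.
Proof.
move=> _ gu; split; first exact: elliptic_preserves_T.
move=> [h [hu hT]]; have Mu : invmx h *m g *m h \in unitmx.
  by rewrite !unitmx_mul unitmx_inv hu gu.
have /(elliptic_conj hu) : elliptic (invmx h *m g *m h).
  by apply: scalar_gram_elliptic (preserves_T_scalar_gram Mu hT) _; apply: exprn_ge0.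
by rewrite !mulmxA mulmxV // mul1mx mulmxK.
Qed.
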